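(* Let $G$ be a real $n\times m$ matrix and $\mathbf v\in\mathbb R^n$, and let $\mathcal G=\{x\in\mathbb R^m: Gx\le \mathbf v\}$, with the inequality understood componentwise. Let $P$ be the nonnegative orthant of $\mathbb R^n$ and $F=\mathcal R(G)$ the range of $G$. Write $\mathbf v=\mathbf v_F+\upsilon$, where $\mathbf v_F$ is the orthogonal projection of $\mathbf v$ onto $F$ and $\upsilon$ is the orthogonal projection of $\mathbf v$ onto $F^\perp$. Assume that $\upsilon\neq 0$ and that $F\cap P=\{0\}$ (strict tangency). Let $C_e=\{t\upsilon+z: t\ge 0,\ z\in F\}$. Then $$\mathcal G\neq\emptyset \iff C_e\cap P\neq\{0\},$$ or, equivalently, $\mathcal G=\emptyset\iff C_e\cap P=\{0\}$.
   Context: The condition $F\cap P=\{0\}$ says that the subspace $\mathcal R(G)$ meets the nonnegative orthant only at the origin; the paper calls this strict tangency. $C_e$ is the convex cone generated by the affine set $\upsilon+F$. *)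

From HB Require Import structures.
From mathcomp Require Import all_boot all_order all_algebra.
From mathcomp Require Import reals.
Set Implicit Arguments. Unset Strict Implicit. Unset Printing Implicit Defensive.
Import Order.TTheory GRing.Theory Num.Theory.
Local Open Scope ring_scope.

Section Defs.
Variables (R : realType) (n m : nat).

Definition in_range (G : 'M[R]_(n, m)) (y : 'cV[R]_n) : Prop :=
  exists x : 'cV[R]_m, y = G *m x.

Definition in_range_perp (G : 'M[R]_(n, m)) (u : 'cV[R]_n) : Prop :=
  forall y, in_range G y -> (u^T *m y) = 0.

Definition nonneg_vec (y : 'cV[R]_n) : Prop := forall i, 0 <= y i 0.

Definition feasible (G : 'M[R]_(n, m)) (v : 'cV[R]_n) (x : 'cV[R]_m) : Prop :=
  forall i, (G *m x) i 0 <= v i 0.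

Definition in_Ce (G : 'M[R]_(n, m)) (ups : 'cV[R]_n) (y : 'cV[R]_n) : Prop :=
  exists t : R, exists z : 'cV[R]_n, 0 <= t /\ in_range G z /\ y = t *: ups + z.

End Defs.

From HB Require Import structures.
From mathcomp Require Import all_boot all_order all_algebra.
From mathcomp Require Import reals.
Set Implicit Arguments. Unset Strict Implicit.
Import Order.TTheory GRing.Theory Num.Theory.
Local Open Scope ring_scope.

(* Write v_F = G x1.  A feasible x gives the nonnegative slack v - G x
   = ups + G (x1 - x), a point of C_e with t = 1; it is nonzero because ups
   is orthogonal to F, hence not in F.  Conversely, a nonzero nonnegative
   t ups + G z in C_e must have t > 0 by strict tangency, and dividing by t
   shows that x1 - z / t is feasible. *)

Lemma trmx_mul_self_eq0 (R : realDomainType) (n : nat) (u : 'cV[R]_n) :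
  u^T *m u = 0 -> u = 0.
Proof.
move=> /(congr1 (fun M : 'M[R]_1 => M 0 0)); rewrite !mxE => sum_sq0.
apply/matrixP => i j; rewrite (ord1 j) [RHS]mxE.
have sq_ge0 (k : 'I_n) : true -> 0 <= u^T 0 k * u k 0.
  by rewrite mxE -expr2 sqr_ge0.
have /eqP := psumr_eq0P sq_ge0 sum_sq0 (i := i) isT.
by rewrite mxE mulf_eq0 orbb => /eqP.
Qed.

Section Feasibility.
Variables (R : realType) (n m : nat) (G : 'M[R]_(n, m)).

Lemma feasibleP (v : 'cV[R]_n) (x : 'cV[R]_m) :
  feasible G v x <-> nonneg_vec (v - G *m x).
Proof.
by split=> h i; have := h i; rewrite !mxE subr_ge0.
Qed.

Lemma in_range_perp_in_range_eq0 (u : 'cV[R]_n) :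
  in_range_perp G u -> in_range G u -> u = 0.
Proof. by move=> u_perp u_in; apply/trmx_mul_self_eq0/u_perp. Qed.

Lemma nonneg_vec_scale (c : R) (y : 'cV[R]_n) :
  0 <= c -> nonneg_vec y -> nonneg_vec (c *: y).
Proof. by move=> c_ge0 y_ge0 i; rewrite mxE mulr_ge0. Qed.

Variables (v ups : 'cV[R]_n) (x1 : 'cV[R]_m).
Hypothesis v_dec : v = G *m x1 + ups.

Lemma slack_in_Ce (x : 'cV[R]_m) : in_Ce G ups (v - G *m x).
Proof.
exists 1, (G *m (x1 - x)); split=> //; split; first by exists (x1 - x).
by rewrite scale1r mulmxBr v_dec addrAC addrC.
Qed.

Lemma slack_neq0 (x : 'cV[R]_m) :
  in_range_perp G ups -> ups != 0 -> v - G *m x != 0.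
Proof.
move=> ups_perp /eqP ups_neq0; apply/eqP => /eqP; rewrite subr_eq0 => /eqP vE.
apply/ups_neq0/in_range_perp_in_range_eq0 => //; exists (x - x1).
by rewrite mulmxBr -vE v_dec addrC addKr.
Qed.

Lemma slack_scaled_Ce (t : R) (z : 'cV[R]_m) : t != 0 ->
  v - G *m (x1 - t^-1 *: z) = t^-1 *: (t *: ups + G *m z).
Proof.
move=> t_neq0; rewrite scalerDr scalerA mulVf // scale1r scalemxAr.
by rewrite mulmxBr opprB v_dec addrC addrA subrK addrC.
Qed.

End Feasibility.

Theorem mainTheorem1 (R : realType) (n m : nat) (G : 'M[R]_(n, m))
    (v vF ups : 'cV[R]_n)
    (* v = v_F + ups, the orthogonal decomposition along F = R(G) and F^perp *)
    (hdec : v = vF + ups) (hvF : in_range G vF) (hups : in_range_perp G ups)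
    (hups0 : ups != 0)
    (* strict tangency: F meets P only at 0 *)
    (htan : forall y, in_range G y -> nonneg_vec y -> y = 0) :
  (exists x, feasible G v x) <->
  (exists y, in_Ce G ups y /\ nonneg_vec y /\ y != 0).
Proof.
have [x1 vFE] := hvF; rewrite vFE in hdec.
split=> [[x /feasibleP x_feas] | [_ [[t [_ [t_ge0 [[z ->] ->]]]] [y_ge0 y_neq0]]]].
  exists (v - G *m x); split; first exact: slack_in_Ce hdec x.
  by split; last exact: slack_neq0 hdec x hups hups0.
have t_neq0 : t != 0.
  apply: contraNneq y_neq0 => t0; rewrite t0 scale0r add0r in y_ge0 *.
  by rewrite (htan _ _ y_ge0) //; exists z.
exists (x1 - t^-1 *: z); apply/feasibleP; rewrite (slack_scaled_Ce hdec) //.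
by apply: nonneg_vec_scale; rewrite // invr_ge0.
Qed.
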